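(* Let $\eta>0$, $n\geq 2$, $G=(-\eta,1+\eta)\times\mathbb{R}^{n-1}$, $\pi:G\to(-\eta,1+\eta)$ the projection to the first coordinate, and $v_0:[0,1]\to G$, $v_0(t)=(t,0)$. For $v\in\Omega([0,1],G)$ write $a_v=\pi(v(0))$, $b_v=\pi(v(1))$. Then for every neighborhood $W_2$ of $v_0$ in $\Omega([0,1],G)$ there exists an open neighborhood $W_3\subseteq W_2$ of $v_0$ with the following property: for every $v\in W_3$ we have $a_v<b_v$ and there exists a section $\tilde v$ of $G|_{[a_v,b_v]}$, i.e. a map $\tilde v:[a_v,b_v]\to G$ of the form $\tilde v(s)=(s,\tilde u(s))$, which is a reparametrization of $v$, i.e. $v=\tilde v\circ\sigma$ for some $C^2$ diffeomorphism $\sigma:[0,1]\to[a_v,b_v]$ with $\sigma(0)=a_v$, $\sigma(1)=b_v$.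
   Context: $\Omega([0,1],G)$ denotes the space of $C^2$ immersions $[0,1]\to G$ with the $C^2$ topology. *)

From Stdlib Require Import Reals.
From Coquelicot Require Import Coquelicot.
Open Scope R_scope.

Definition C2fun (f : R -> R) : Prop :=
  (forall t, ex_derive f t) /\
  (forall t, ex_derive (Derive f) t) /\
  (forall t, continuous (Derive_n f 2) t).

(* A curve in R^n is given by its coordinate functions (coordinates k < n,
   coordinate 0 is the first one); curves are C^2 maps R -> R^n, of which
   only the restriction to [0,1] matters (a C^2 map on [0,1], with one-sided
   derivatives at the endpoints, is exactly the restriction of a C^2 map on R). *)
Definition curve := nat -> R -> R.

Definition C2curve (n : nat) (v : curve) : Prop :=
  forall k, (k < n)%nat -> C2fun (v k).

Definition Omega (n : nat) (eta : R) (v : curve) : Prop :=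
  C2curve n v /\
  (forall t, 0 <= t <= 1 -> - eta < v O t < 1 + eta) /\
  (forall t, 0 <= t <= 1 -> exists k, (k < n)%nat /\ Derive (v k) t <> 0).

Definition C2close (n : nat) (eps : R) (v w : curve) : Prop :=
  forall k j t, (k < n)%nat -> (j <= 2)%nat -> 0 <= t <= 1 ->
    Rabs (Derive_n (w k) j t - Derive_n (v k) j t) < eps.

Definition C2nbhd (n : nat) (eta : R) (W : curve -> Prop) (v : curve) : Prop :=
  exists eps, 0 < eps /\
    forall w, Omega n eta w -> C2close n eps v w -> W w.

Definition C2open (n : nat) (eta : R) (W : curve -> Prop) : Prop :=
  (forall v, W v -> Omega n eta v) /\
  (forall v, W v -> C2nbhd n eta W v).

Definition v0 : curve := fun k t => match k with O => t | _ => 0 end.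

Definition C2diffeo01 (sigma : R -> R) (a b : R) : Prop :=
  exists tau : R -> R,
    C2fun sigma /\ C2fun tau /\
    (forall t, 0 <= t <= 1 -> a <= sigma t <= b /\ tau (sigma t) = t) /\
    (forall s, a <= s <= b -> 0 <= tau s <= 1 /\ sigma (tau s) = s).

From Stdlib Require Import Reals Lra Lia Ranalysis5.
From Coquelicot Require Import Coquelicot.
Open Scope R_scope.

(* C^2-closeness to v0 = (t, 0) forces the first coordinate V of v to satisfy
   V' > 1/2 and |V''| < 1/2 on [0,1].  Beyond an endpoint p, V is continued by
   a + b (t - p) + c (1 - cos (2 (t - p))) / 4, which has the same 2-jet (a, b, c)
   at p and slope at least b - |c|/2 > 1/4.  The continuation sigma is thus a C^2
   map R -> R with slope >= 1/4, hence a C^2 diffeomorphism of R, and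
   v = (sigma, u o sigma) with u_k := v_k o sigma^-1. *)

Definition glue (p : R) (f1 f2 : R -> R) (t : R) : R :=
  if Rle_dec t p then f1 t else f2 t.

Lemma glue_le p f1 f2 t : t <= p -> glue p f1 f2 t = f1 t.
Proof. intros Ht; unfold glue; destruct (Rle_dec t p); [easy | lra]. Qed.

Lemma glue_ge p f1 f2 t : f1 p = f2 p -> p <= t -> glue p f1 f2 t = f2 t.
Proof.
  intros Ep Ht; unfold glue; destruct (Rle_dec t p); [|easy].
  now replace t with p by lra.
Qed.

Lemma derivable_pt_lim_glue p f1 f2 d1 d2 t :
  (forall t, derivable_pt_lim f1 t (d1 t)) ->
  (forall t, derivable_pt_lim f2 t (d2 t)) ->
  f1 p = f2 p -> d1 p = d2 p ->
  derivable_pt_lim (glue p f1 f2) t (glue p d1 d2 t).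
Proof.
  intros H1 H2 Ef Ed eps Heps.
  destruct (H1 t eps Heps) as [e1 He1], (H2 t eps Heps) as [e2 He2].
  destruct (Rle_or_lt t p) as [Htp | Hpt]; [destruct (Req_dec t p) as [-> | Hne] |].
  - exists (mkposreal _ (Rmin_pos _ _ (cond_pos e1) (cond_pos e2))).
    intros h Hh0 Hh; simpl in Hh.
    assert (Hm1 := Rmin_l e1 e2); assert (Hm2 := Rmin_r e1 e2).
    rewrite (glue_le p d1 d2 p) by lra.
    destruct (Rle_or_lt h 0).
    + rewrite !glue_le by lra; apply He1; auto; lra.
    + rewrite !glue_ge, Ed by lra; apply He2; auto; lra.
  - exists (mkposreal _ (Rmin_pos _ _ (cond_pos e1) (ltac:(lra) : 0 < p - t))).
    intros h Hh0 Hh; simpl in Hh.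
    assert (Hm1 := Rmin_l e1 (p - t)); assert (Hm2 := Rmin_r e1 (p - t)).
    apply Rabs_def2 in Hh.
    rewrite !glue_le by lra; apply He1; auto; apply Rabs_def1; lra.
  - exists (mkposreal _ (Rmin_pos _ _ (cond_pos e2) (ltac:(lra) : 0 < t - p))).
    intros h Hh0 Hh; simpl in Hh.
    assert (Hm1 := Rmin_l e2 (t - p)); assert (Hm2 := Rmin_r e2 (t - p)).
    apply Rabs_def2 in Hh.
    rewrite !glue_ge by lra; apply He2; auto; apply Rabs_def1; lra.
Qed.

Lemma continuity_pt_glue p f1 f2 t :
  (forall t, continuity_pt f1 t) -> (forall t, continuity_pt f2 t) ->
  f1 p = f2 p -> continuity_pt (glue p f1 f2) t.
Proof.
  intros H1 H2 Ef eps Heps.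
  destruct (H1 t eps Heps) as [e1 [He1 Hc1]], (H2 t eps Heps) as [e2 [He2 Hc2]].
  simpl in Hc1, Hc2 |- *; unfold R_dist in *.
  destruct (Rle_or_lt t p) as [Htp | Hpt]; [destruct (Req_dec t p) as [-> | Hne] |].
  - exists (Rmin e1 e2); split; [now apply Rmin_pos|].
    intros x [Hx Hxt].
    assert (Hm1 := Rmin_l e1 e2); assert (Hm2 := Rmin_r e1 e2).
    destruct (Rle_or_lt x p).
    + rewrite !glue_le by lra; apply Hc1; split; [easy | lra].
    + rewrite !glue_ge by lra; apply Hc2; split; [easy | lra].
  - exists (Rmin e1 (p - t)); split; [apply Rmin_pos; lra|].
    intros x [Hx Hxt].
    assert (Hm1 := Rmin_l e1 (p - t)); assert (Hm2 := Rmin_r e1 (p - t)).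
    apply Rabs_def2 in Hxt.
    rewrite !glue_le by lra; apply Hc1; split; [easy | apply Rabs_def1; lra].
  - exists (Rmin e2 (t - p)); split; [apply Rmin_pos; lra|].
    intros x [Hx Hxt].
    assert (Hm1 := Rmin_l e2 (t - p)); assert (Hm2 := Rmin_r e2 (t - p)).
    apply Rabs_def2 in Hxt.
    rewrite !glue_ge by lra; apply Hc2; split; [easy | apply Rabs_def1; lra].
Qed.

Definition C2_derivs (f f' f'' : R -> R) : Prop :=
  (forall t, derivable_pt_lim f t (f' t)) /\
  (forall t, derivable_pt_lim f' t (f'' t)) /\
  (forall t, continuity_pt f'' t).

Lemma C2fun_C2_derivs f : C2fun f -> C2_derivs f (Derive f) (Derive (Derive f)).
Proof.
  intros [H1 [H2 H3]]; split; [|split]; intro t.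
  - apply is_derive_Reals, Derive_correct, H1.
  - apply is_derive_Reals, Derive_correct, H2.
  - apply continuity_pt_filterlim, H3.
Qed.

Lemma C2_derivs_C2fun f f' f'' : C2_derivs f f' f'' -> C2fun f.
Proof.
  intros [H1 [H2 H3]].
  assert (E1 : forall t, Derive f t = f' t).
  { intro t; apply is_derive_unique, is_derive_Reals, H1. }
  assert (E2 : forall t, Derive (Derive f) t = f'' t).
  { intro t; rewrite (Derive_ext _ _ t E1); apply is_derive_unique, is_derive_Reals, H2. }
  split; [|split]; intro t.
  - exists (f' t); apply is_derive_Reals, H1.
  - exists (f'' t); apply (is_derive_ext f'); [now intro; rewrite E1|].
    apply is_derive_Reals, H2.
  - apply (continuous_ext f''); [now intro; simpl; rewrite E2|].
    apply continuity_pt_filterlim, H3.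
Qed.

Lemma C2_derivs_glue p f1 f1' f1'' f2 f2' f2'' :
  C2_derivs f1 f1' f1'' -> C2_derivs f2 f2' f2'' ->
  f1 p = f2 p -> f1' p = f2' p -> f1'' p = f2'' p ->
  C2_derivs (glue p f1 f2) (glue p f1' f2') (glue p f1'' f2'').
Proof.
  intros [A1 [B1 C1]] [A2 [B2 C2]] E0 E1 E2; split; [|split]; intro t.
  - now apply derivable_pt_lim_glue.
  - now apply derivable_pt_lim_glue.
  - now apply continuity_pt_glue.
Qed.

Definition cos_ext p a b c t := a + b * (t - p) + c * (1 - cos (2 * (t - p))) / 4.
Definition cos_ext' p b c t := b + c * sin (2 * (t - p)) / 2.
Definition cos_ext'' p c t := c * cos (2 * (t - p)).

Lemma C2_derivs_cos_ext p a b c :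
  C2_derivs (cos_ext p a b c) (cos_ext' p b c) (cos_ext'' p c).
Proof.
  unfold cos_ext, cos_ext', cos_ext''; split; [|split]; intro t.
  - apply is_derive_Reals; auto_derive; [easy | unfold Rminus; field].
  - apply is_derive_Reals; auto_derive; [easy | unfold Rminus; field].
  - apply continuity_pt_filterlim, (ex_derive_continuous (fun t => c * cos (2 * (t - p)))).
    auto_derive; easy.
Qed.

Lemma cos_ext_at p a b c :
  cos_ext p a b c p = a /\ cos_ext' p b c p = b /\ cos_ext'' p c p = c.
Proof.
  unfold cos_ext, cos_ext', cos_ext''; rewrite Rminus_diag, Rmult_0_r, Rmult_0_r, cos_0, sin_0.
  repeat split; field.
Qed.

Lemma cos_ext'_lb m p b c t : m + Rabs c / 2 <= b -> m <= cos_ext' p b c t.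
Proof.
  intros Hb; unfold cos_ext'.
  assert (Hs := SIN_bound (2 * (t - p))).
  assert (Hc1 := Rle_abs c); assert (Hc2 := Rle_abs (- c)); rewrite Rabs_Ropp in Hc2.
  nra.
Qed.

Lemma expanding_of_derive_lb g g' m :
  (forall t, derivable_pt_lim g t (g' t)) -> (forall t, m <= g' t) ->
  forall x y, x <= y -> m * (y - x) <= g y - g x.
Proof.
  intros Hd Hm x y Hxy.
  destruct (Req_dec x y) as [-> | Hne]; [lra|].
  destruct (MVT_gen g x y g') as [c [_ ->]].
  - intros; apply is_derive_Reals, Hd.
  - intros; apply derivable_continuous_pt; exists (g' x0); apply Hd.
  - specialize (Hm c); nra.
Qed.

Section ExpandingMap.

Variables (g : R -> R) (m : R).
Hypothesis m_gt0 : 0 < m.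
Hypothesis g_expanding : forall x y, x <= y -> m * (y - x) <= g y - g x.

Lemma expanding_lt x y : x < y -> g x < g y.
Proof. intros Hxy; assert (H := g_expanding x y (Rlt_le _ _ Hxy)); nra. Qed.

Lemma expanding_le x y : x <= y -> g x <= g y.
Proof. intros Hxy; assert (H := g_expanding x y Hxy); nra. Qed.

Lemma expanding_inverse :
  continuity g -> exists tau, (forall t, tau (g t) = t) /\ (forall s, g (tau s) = s).
Proof.
  intros Hg.
  assert (Hsol : forall s, {t | g t = s}).
  { intro s; set (r := Rabs (s - g 0) / m).
    assert (Hr : m * r = Rabs (s - g 0)) by (unfold r; field; lra).
    assert (Hr0 : 0 <= r) by (unfold r; apply Rdiv_le_0_compat; [apply Rabs_pos | lra]).
    assert (Hup := g_expanding 0 r Hr0).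
    assert (Hlo := g_expanding (- r) 0 ltac:(lra)).
    assert (Hs1 := Rle_abs (s - g 0)); assert (Hs2 := Rle_abs (- (s - g 0))).
    rewrite Rabs_Ropp in Hs2.
    destruct (IVT_gen g (- r) r s Hg) as [t [_ Ht]]; [|now exists t].
    rewrite Rmin_left, Rmax_right by lra; split; lra. }
  exists (fun s => proj1_sig (Hsol s)).
  assert (Hgt : forall s, g (proj1_sig (Hsol s)) = s) by (intro s; apply proj2_sig).
  split; [|exact Hgt].
  intro t; destruct (Rtotal_order (proj1_sig (Hsol (g t))) t) as [Hne | [Heq | Hne]];
    [| exact Heq |]; apply expanding_lt in Hne; rewrite Hgt in Hne; lra.
Qed.

Variable tau : R -> R.
Hypothesis tau_g : forall t, tau (g t) = t.
Hypothesis g_tau : forall s, g (tau s) = s.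

Lemma inverse_le x y : x <= y -> tau x <= tau y.
Proof.
  intros Hxy; destruct (Rle_or_lt (tau x) (tau y)) as [Hle | Hgt]; [exact Hle|].
  apply expanding_lt in Hgt; rewrite !g_tau in Hgt; lra.
Qed.

Lemma derivable_pt_lim_inverse g' :
  (forall t, derivable_pt_lim g t (g' t)) -> (forall t, m <= g' t) ->
  forall s, derivable_pt_lim tau s (/ g' (tau s)).
Proof.
  intros Hd Hm s.
  assert (Hg : forall x, continuity_pt g x).
  { intro x; apply derivable_continuous_pt; exists (g' x); apply Hd. }
  assert (Htau : continuity_pt tau s).
  { apply (continuity_pt_recip_interv g tau (tau s - 1) (tau s + 1)); [lra | | | | |].
    - intros x y _ Hxy _; now apply expanding_lt.
    - intros x _ _; apply g_tau.
    - intros x Hlo Hhi; apply inverse_le in Hlo, Hhi; rewrite tau_g in Hlo, Hhi; lra.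
    - intros; apply Hg.
    - rewrite <- (g_tau s) at 2 3; split; apply expanding_lt; lra. }
  assert (Hmid : tau (s - 1) <= tau s <= tau (s + 1)) by (split; apply inverse_le; lra).
  assert (Hrecip := derivable_pt_lim_recip_interv g tau (s - 1) (s + 1) s
    (fun a _ => exist _ (g' a) (Hd a)) Htau ltac:(lra) ltac:(lra) Hmid
    ltac:(intros; apply g_tau)).
  simpl in Hrecip; rewrite <- Rdiv_1_l; apply Hrecip.
  specialize (Hm (tau s)); lra.
Qed.

Lemma C2_derivs_inverse g' g'' :
  C2_derivs g g' g'' -> (forall t, m <= g' t) ->
  C2_derivs tau (fun s => / g' (tau s)) (fun s => - g'' (tau s) / g' (tau s) ^ 3).
Proof.
  intros [Hd [Hdd Hc]] Hm.
  assert (Hdtau := derivable_pt_lim_inverse g' Hd Hm).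
  assert (Hne : forall s, g' (tau s) <> 0) by (intro s; specialize (Hm (tau s)); lra).
  split; [exact Hdtau | split]; intro s.
  - apply is_derive_Reals.
    replace (- g'' (tau s) / g' (tau s) ^ 3)
      with (- (/ g' (tau s) * g'' (tau s)) / g' (tau s) ^ 2) by (field; apply Hne).
    apply (is_derive_inv (fun s => g' (tau s))); [| apply Hne].
    apply (is_derive_comp g' tau); apply is_derive_Reals; [apply Hdd | apply Hdtau].
  - assert (Hcube : forall x, continuity_pt (fun x => g' x ^ 3) x).
    { intro x; apply continuity_pt_filterlim, (ex_derive_continuous (fun x => g' x ^ 3)).
      auto_derive; exists (g'' x); apply is_derive_Reals, Hdd. }
    apply (continuity_pt_comp tau (fun x => - g'' x / g' x ^ 3)).
    + apply derivable_continuous_pt; exists (/ g' (tau s)); apply Hdtau.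
    + apply continuity_pt_div; [now apply continuity_pt_opp | apply Hcube | apply pow_nonzero, Hne].
Qed.

End ExpandingMap.

Lemma C2_expanding_extension V m :
  C2fun V ->
  (forall t, 0 <= t <= 1 -> m + Rabs (Derive (Derive V) t) / 2 <= Derive V t) ->
  exists g g' g'', C2_derivs g g' g'' /\ (forall t, m <= g' t) /\
    (forall t, 0 <= t <= 1 -> g t = V t).
Proof.
  intros HV Hm.
  set (V' := Derive V); set (V'' := Derive V').
  destruct (cos_ext_at 0 (V 0) (V' 0) (V'' 0)) as [E0 [E0' E0'']].
  destruct (cos_ext_at 1 (V 1) (V' 1) (V'' 1)) as [E1 [E1' E1'']].
  exists (glue 0 (cos_ext 0 (V 0) (V' 0) (V'' 0)) (glue 1 V (cos_ext 1 (V 1) (V' 1) (V'' 1)))),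
    (glue 0 (cos_ext' 0 (V' 0) (V'' 0)) (glue 1 V' (cos_ext' 1 (V' 1) (V'' 1)))),
    (glue 0 (cos_ext'' 0 (V'' 0)) (glue 1 V'' (cos_ext'' 1 (V'' 1)))).
  split; [|split].
  - apply C2_derivs_glue; try apply C2_derivs_cos_ext;
      try (rewrite glue_le by lra; assumption).
    apply C2_derivs_glue; try apply C2_derivs_cos_ext; try congruence.
    now apply C2fun_C2_derivs.
  - intro t; unfold glue.
    destruct (Rle_dec t 0); [|destruct (Rle_dec t 1)].
    + apply cos_ext'_lb, Hm; lra.
    + specialize (Hm t ltac:(lra)); assert (H := Rabs_pos (Derive (Derive V) t)); unfold V'; lra.
    + apply cos_ext'_lb, Hm; lra.
  - intros t Ht; unfold glue.
    destruct (Rle_dec t 0); [|destruct (Rle_dec t 1); [easy | lra]].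
    now replace t with 0 by lra.
Qed.

Lemma C2_derivs_id : C2_derivs (fun t => t) (fun _ => 1) (fun _ => 0).
Proof.
  split; [|split]; intro t.
  - apply derivable_pt_lim_id.
  - apply derivable_pt_lim_const.
  - apply continuity_pt_const; now intros ? ?.
Qed.

Lemma C2_derivs_const c : C2_derivs (fun _ => c) (fun _ => 0) (fun _ => 0).
Proof.
  split; [|split]; intro t.
  - apply derivable_pt_lim_const.
  - apply derivable_pt_lim_const.
  - apply continuity_pt_const; now intros ? ?.
Qed.

Lemma Omega_v0 n eta : 0 < eta -> (1 <= n)%nat -> Omega n eta v0.
Proof.
  intros Heta Hn; split; [|split].
  - intros [|k] _; eapply C2_derivs_C2fun; [apply C2_derivs_id | apply C2_derivs_const].
  - intros t Ht; simpl; lra.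
  - intros t _; exists O; split; [lia|].
    simpl; rewrite Derive_id; apply R1_neq_R0.
Qed.

Lemma section_reparametrization n (v : curve) m :
  0 < m -> C2fun (v O) ->
  (forall t, 0 <= t <= 1 -> m + Rabs (Derive (Derive (v O)) t) / 2 <= Derive (v O) t) ->
  v O 0 < v O 1 /\
  exists (sigma : R -> R) (u : curve),
    C2diffeo01 sigma (v O 0) (v O 1) /\
    sigma 0 = v O 0 /\ sigma 1 = v O 1 /\
    forall t, 0 <= t <= 1 ->
      v O t = sigma t /\
      forall k, (1 <= k < n)%nat -> v k t = u k (sigma t).
Proof.
  intros Hm HV Hbound.
  destruct (C2_expanding_extension (v O) m HV Hbound) as (g & g' & g'' & Hg & Hg' & Hgv).
  assert (Hexp := expanding_of_derive_lb g g' m (proj1 Hg) Hg').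
  destruct (expanding_inverse g m Hm Hexp) as (tau & Htg & Hgt).
  { intro x; apply derivable_continuous_pt; exists (g' x); apply (proj1 Hg). }
  assert (Htau := C2_derivs_inverse g m Hm Hexp tau Htg Hgt g' g'' Hg Hg').
  assert (Hg_le := expanding_le g m Hm Hexp).
  assert (Htau_le := inverse_le g m Hm Hexp tau Hgt).
  rewrite <- (Hgv 0), <- (Hgv 1) by lra.
  split; [apply (expanding_lt g m Hm Hexp); lra|].
  exists g, (fun k s => v k (tau s)); split; [|split; [|split]]; try easy.
  - exists tau; split; [|split; [|split]].
    + exact (C2_derivs_C2fun _ _ _ Hg).
    + exact (C2_derivs_C2fun _ _ _ Htau).
    + intros t Ht; split; [split; apply Hg_le; lra | apply Htg].
    + intros s Hs; split; [|apply Hgt].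
      rewrite <- (Htg 0), <- (Htg 1); split; apply Htau_le; lra.
  - intros t Ht; split; [symmetry; apply Hgv, Ht | intros k _; now rewrite Htg].
Qed.

Lemma C2close_v0_first_coord n d v :
  (1 <= n)%nat -> d <= 1/2 -> C2close n d v0 v ->
  forall t, 0 <= t <= 1 ->
    1/4 + Rabs (Derive (Derive (v O)) t) / 2 <= Derive (v O) t.
Proof.
  intros Hn Hd Hclose t Ht.
  assert (H1 := Hclose O 1%nat t ltac:(lia) ltac:(lia) Ht).
  assert (H2 := Hclose O 2%nat t ltac:(lia) ltac:(lia) Ht).
  change (Rabs (Derive (v O) t - Derive (fun t => t) t) < d) in H1.
  change (Rabs (Derive (Derive (v O)) t - Derive (Derive (fun t => t)) t) < d) in H2.
  rewrite Derive_id in H1.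
  rewrite (Derive_ext (Derive (fun t => t)) (fun _ => 1)), Derive_const, Rminus_0_r in H2
    by apply Derive_id.
  apply Rabs_def2 in H1; lra.
Qed.

Lemma C2close_le n d d' v w : d <= d' -> C2close n d v w -> C2close n d' v w.
Proof. intros Hd Hclose k j t Hk Hj Ht; specialize (Hclose k j t Hk Hj Ht); lra. Qed.

Lemma C2close_refl n d v : 0 < d -> C2close n d v v.
Proof. intros Hd k j t _ _ _; now rewrite Rminus_diag, Rabs_R0. Qed.

Lemma C2close_trans n d d' u v w :
  C2close n d u v -> C2close n d' v w -> C2close n (d + d') u w.
Proof.
  intros Huv Hvw k j t Hk Hj Ht.
  specialize (Huv k j t Hk Hj Ht); specialize (Hvw k j t Hk Hj Ht).
  eapply Rle_lt_trans; [| rewrite Rplus_comm; apply (Rplus_lt_compat _ _ _ _ Hvw Huv)].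
  replace (Derive_n (w k) j t - Derive_n (u k) j t) with
    ((Derive_n (w k) j t - Derive_n (v k) j t) + (Derive_n (v k) j t - Derive_n (u k) j t))
    by ring.
  apply Rabs_triang.
Qed.

Definition C2ball (n : nat) (eta eps : R) (w v : curve) : Prop :=
  Omega n eta v /\ exists d, 0 < d < eps /\ C2close n d w v.

Lemma C2open_C2ball n eta eps w : C2open n eta (C2ball n eta eps w).
Proof.
  split; [now intros v [Hv _]|].
  intros v [Hv (d & Hd & Hclose)].
  exists ((eps - d) / 2); split; [lra|].
  intros u Hu Hvu; split; [exact Hu|].
  exists (d + (eps - d) / 2); split; [lra|].
  now apply (C2close_trans n d _ w v u).
Qed.

Lemma C2ball_center n eta eps w : 0 < eps -> Omega n eta w -> C2ball n eta eps w w.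
Proof.
  intros Heps Hw; split; [exact Hw|].
  exists (eps / 2); split; [lra|]; apply C2close_refl; lra.
Qed.

Theorem proposition2p4 (eta : R) (n : nat) (heta : 0 < eta) (hn : (2 <= n)%nat)
  (W2 : curve -> Prop) (hW2 : C2nbhd n eta W2 v0) :
  exists W3 : curve -> Prop,
    C2open n eta W3 /\ W3 v0 /\ (forall v, W3 v -> W2 v) /\
    forall v, W3 v ->
      v O 0 < v O 1 /\
      exists (sigma : R -> R) (u : curve),
        C2diffeo01 sigma (v O 0) (v O 1) /\
        sigma 0 = v O 0 /\ sigma 1 = v O 1 /\
        forall t, 0 <= t <= 1 ->
          v O t = sigma t /\
          forall k, (1 <= k < n)%nat -> v k t = u k (sigma t).
Proof.
  destruct hW2 as (eps & Heps & HW2).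
  set (r := Rmin eps (1/2)).
  assert (Hr : 0 < r <= eps /\ r <= 1/2).
  { unfold r; repeat split; [apply Rmin_pos; lra | apply Rmin_l | apply Rmin_r]. }
  exists (C2ball n eta r v0); split; [|split; [|split]].
  - apply C2open_C2ball.
  - apply C2ball_center; [lra | apply Omega_v0; [easy | lia]].
  - intros v [Hv (d & Hd & Hclose)].
    apply HW2; [exact Hv|]; apply (C2close_le n d); [lra | exact Hclose].
  - intros v [[HC _] (d & Hd & Hclose)].
    apply (section_reparametrization n v (1/4)); [lra | apply HC; lia |].
    apply (C2close_v0_first_coord n d); [lia | lra | exact Hclose].
Qed.
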